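(* Let $\mathcal Z$ be the set of zeros of $1-Q(z)$ of minimal modulus with $|z|\le\rho$. This set is either empty or has exactly one real positive element, called $\rho_0$. Let $\rho_D$ be the radius of convergence of $D(z)=1/(1-Q(z))$ and $\delta=P'(1)$. If $\delta\ge0$, then $\rho_D=\rho_0<\frac1{P(1)}\le\rho$. If $\delta<0$, then: $Q(\rho)>1$ if and only if $\rho_D=\rho_0<\rho$; $Q(\rho)=1$ if and only if $\rho_D=\rho_0=\rho$; $Q(\rho)<1$ if and only if $\rho_D=\rho$ and $\mathcal Z$ is empty.
   Context: Fix integers $c,d\ge1$ and non-negative real weights $p_{-c},\dots,p_d$ with $p_{-c}\neq0\neq p_d$; jump set $\mathcal J=\{i: p_i\neq0\}$, jump polynomial $P(u)=\sum_{i=-c}^dp_iu^i$. Standing assumption: $P$ is aperiodic (there are no integer $b$, integer $p\ge2$ and Laurent polynomial $H$ with $P(u)=u^bH(u^p)$). A catastrophe is a step from an altitude $h>0$ with $-h\notin\mathcal J$ directly to altitude $0$, of weight $q>0$. Let $M(z,u)=\sum m_{n,k}z^nu^k$, with $m_{n,k}$ the total weight (product of jump weights $p_i$) of paths of length $n$ using jumps from $\mathcal J$, starting at $0$, never going below $0$ and ending at altitude $k$; $M_k(z)=[u^k]M(z,u)$, $M(z)=M(z,1)$, $E(z)=M_0(z)$. Let $Q(z)=zq\big(M(z)-E(z)-\sum_{j>0,-j\in\mathcal J}M_j(z)\big)$. Let $\tau>0$ be the minimal positive real solution of $P'(\tau)=0$ and $\rho=1/P(\tau)$. *)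

From Stdlib Require Export Reals ZArith List Bool.
From Coquelicot Require Export Coquelicot.
Open Scope R_scope.

Section Walks.
(* c d : the jump range [-c, d];  p : the weights p_i (only i in [-c,d] used) *)
Variables (c d : nat) (p : Z -> R).

Definition pcoef (i : Z) : R :=
  if ((- Z.of_nat c <=? i) && (i <=? Z.of_nat d))%Z%bool then p i else 0.

Definition zsum (f : Z -> R) : R :=
  sum_f_R0 (fun k => f (- Z.of_nat c + Z.of_nat k)%Z) (c + d).

Definition Pjump (u : R) : R := zsum (fun i => p i * powerRZ u i).
Definition Pjump' (u : R) : R := zsum (fun i => IZR i * p i * powerRZ u (i - 1)).

(* aperiodicity: there are no b, per >= 2 and Laurent polynomial H with
   P(u) = u^b H(u^per)  (identity of Laurent polynomials, coefficientwise) *)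
Definition aperiodic : Prop :=
  ~ exists (b per : Z) (h : Z -> R),
      (2 <= per)%Z /\
      forall i : Z, pcoef i =
        (if Z.eqb ((i - b) mod per)%Z 0%Z then h ((i - b) / per)%Z else 0).

Definition jumps : list Z :=
  filter (fun i => if Req_dec_T (p i) 0 then false else true)
    (map (fun k => (- Z.of_nat c + Z.of_nat k)%Z) (seq 0 (S (c + d)))).

Fixpoint words (n : nat) : list (list Z) :=
  match n with
  | O => nil :: nil
  | S n' => flat_map (fun i => map (cons i) (words n')) jumps
  end.

Fixpoint stays_nonneg (h : Z) (w : list Z) : bool :=
  match w with
  | nil => true
  | i :: w' => ((0 <=? h + i)%Z && stays_nonneg (h + i) w')%bool
  end.

Definition endpoint (w : list Z) : Z := fold_right Z.add 0%Z w.
Definition weight (w : list Z) : R := fold_right (fun i acc => p i * acc) 1 w.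

Definition sumR (l : list R) : R := fold_right Rplus 0 l.

Definition mnk (n : nat) (k : Z) : R :=
  sumR (map weight
    (filter (fun w => (stays_nonneg 0 w && Z.eqb (endpoint w) k)%bool) (words n))).

Definition Mcoef (n : nat) : R :=
  sumR (map weight (filter (fun w => stays_nonneg 0 w) (words n))).

(* coefficients of Q(z) = z q (M(z) - E(z) - sum_{j>0, -j in J} M_j(z)) *)
Definition Qcoef (q : R) (n : nat) : R :=
  match n with
  | O => 0
  | S n' => q * (Mcoef n' - mnk n' 0
                 - sum_f_R0 (fun j => if Req_dec_T (p (- Z.of_nat (S j))%Z) 0
                                      then 0 else mnk n' (Z.of_nat (S j))) (c - 1))
  end.

Fixpoint Qpow (q : R) (k n : nat) : R :=
  match k with
  | O => if Nat.eqb n 0 then 1 else 0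
  | S k' => sum_f_R0 (fun i => Qcoef q i * Qpow q k' (n - i)) n
  end.

(* coefficients of D(z) = 1/(1 - Q(z)) = sum_k Q(z)^k  (Q(0) = 0) *)
Definition Dcoef (q : R) (n : nat) : R := sum_f_R0 (fun k => Qpow q k n) n.

Definition Q_is (q : R) (z w : C) : Prop :=
  is_series (fun n => (RtoC (Qcoef q n) * pow_n (K := C_Ring) z n)%C) w.

(* Q(x) in [0, +oo] for real x >= 0 (series with nonnegative terms) *)
Definition Qreal (q : R) (x : R) : Rbar :=
  Lim_seq (fun N => sum_f_R0 (fun n => Qcoef q n * x ^ n) N).

Definition zero_le (q rho : R) (z : C) : Prop :=
  Cmod z <= rho /\ Q_is q z (RtoC 1).

Definition Zset (q rho : R) (z : C) : Prop :=
  zero_le q rho z /\ forall w, zero_le q rho w -> Cmod z <= Cmod w.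

End Walks.

(* Up to the factor q, [z^(n+1)] Q(z) counts (with weights) the nonnegative walks of length n
   ending at an altitude from which a catastrophe is allowed, so it lies between
   q p_d^(c+1) W_(n-c-1) and q W_n, where W_n = [z^n] M(z) counts all nonnegative walks.
   Trivially W_n <= P(1)^n, and the jump polynomial is strictly convex on (0, +oo), so
   P(tau) <= P(u) for u > 0.  Since P'(tau) = 0, test functions tau^k * (polynomial in k) are
   almost eigenfunctions of the one-step operator of the walk; this gives W_n >= C lam^n for
   every lam < P(tau), hence the radius of Q is at most rho.  If delta = P'(1) >= 0 the test function k + 1 gives
   W_n >= P(1)^n / (d n + 1), so Q diverges at 1 / P(1); if delta < 0 then tau > 1 and a
   Lyapunov function shows that Q(rho) is finite.  As Q has nonnegative coefficients, 1 - Q has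
   at most one zero on (0, rho], every complex zero has modulus at least that of a real one,
   and this real zero is the radius of convergence of D = sum_k Q^k. *)

From Stdlib Require Import Lra Lia Classical FunctionalExtensionality.
Open Scope R_scope.

Lemma sum_f_R0_ge0 (f : nat -> R) N :
  (forall j, (j <= N)%nat -> 0 <= f j) -> 0 <= sum_f_R0 f N.
Proof.
  intros Hf. rewrite <- (Rmult_0_l (INR (S N))), <- sum_cte.
  apply sum_Rle. exact Hf.
Qed.

Lemma sum_f_R0_ge_term (f : nat -> R) N k :
  (forall j, (j <= N)%nat -> 0 <= f j) -> (k <= N)%nat -> f k <= sum_f_R0 f N.
Proof.
  intros Hf Hk. induction N as [|N IH]; simpl.
  - replace k with 0%nat by lia. lra.
  - assert (0 <= sum_f_R0 f N) by (apply sum_f_R0_ge0; intros; apply Hf; lia).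
    assert (0 <= f (S N)) by (apply Hf; lia).
    destruct (Nat.eq_dec k (S N)) as [->|Hne]; [lra|].
    assert (f k <= sum_f_R0 f N) by (apply IH; [intros; apply Hf|]; lia).
    lra.
Qed.

Lemma sum_f_R0_mono_N (f : nat -> R) N M :
  (forall j, 0 <= f j) -> (N <= M)%nat -> sum_f_R0 f N <= sum_f_R0 f M.
Proof.
  intros Hf HNM. induction HNM as [|M _ IH]; [lra|].
  rewrite tech5. specialize (Hf (S M)). lra.
Qed.

Lemma sum_f_R0_shift_le (f : nat -> R) N k : (forall n, 0 <= f n) ->
  sum_f_R0 (fun n => f (n + k)%nat) N <= sum_f_R0 f (N + k).
Proof.
  intros Hf. induction N as [|N IH]; simpl.
  - apply sum_f_R0_ge_term; auto.
  - specialize (Hf (S (N + k))). lra.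
Qed.

Lemma pow_ge_bernoulli x n : 0 <= x -> 1 + INR n * (x - 1) <= x ^ n.
Proof.
  intros Hx. induction n as [|n IH]; [simpl; lra|].
  rewrite S_INR. change (x ^ S n) with (x * x ^ n). pose proof (pos_INR n).
  assert (x * (1 + INR n * (x - 1)) <= x * x ^ n) by (apply Rmult_le_compat_l; lra).
  assert (0 <= INR n * ((x - 1) * (x - 1))) by (apply Rmult_le_pos; [lra | apply Rle_0_sqr]).
  nra.
Qed.

Lemma pow_gt_near_one y N : 0 <= y < 1 -> exists t, 0 < t < 1 /\ y < t ^ N.
Proof.
  intros Hy. pose proof (pos_INR N).
  set (e := (1 - y) / (INR N + 2)).
  assert (E : e * (INR N + 2) = 1 - y) by (unfold e; field; lra).
  assert (He : 0 < e) by (unfold e; apply Rdiv_lt_0_compat; lra).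
  exists (1 - e). split; [nra|].
  pose proof (pow_ge_bernoulli (1 - e) N ltac:(nra)). nra.
Qed.

Lemma harmonic_unbounded B : exists N, B < sum_f_R0 (fun n => / (INR n + 1)) N.
Proof.
  assert (Hexp : forall N, INR N + 2 <= exp (sum_f_R0 (fun n => / (INR n + 1)) N)).
  { induction N as [|N IH].
    - simpl. replace (/ (0 + 1)) with 1 by field.
      pose proof (exp_ineq1 1 R1_neq_R0). lra.
    - rewrite tech5, exp_plus, S_INR. pose proof (pos_INR N).
      assert (Hi : 0 < / (INR N + 1 + 1)) by (apply Rinv_0_lt_compat; lra).
      pose proof (exp_ineq1 _ (Rgt_not_eq _ _ Hi)).
      assert (E : (INR N + 2) * (1 + / (INR N + 1 + 1)) = INR N + 1 + 2) by (field; lra).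
      nra. }
  destruct (INR_unbounded (exp B)) as [N HN]. exists N.
  apply exp_lt_inv. specialize (Hexp N). lra.
Qed.

Lemma is_series_of_partial_const u l : (forall N, sum_f_R0 u N = l) -> is_series u l.
Proof.
  intros H. apply is_series_Reals. intros eps Heps. exists 0%nat. intros n _.
  unfold Rdist. rewrite H, Rminus_diag, Rabs_R0. lra.
Qed.

Lemma is_series_eq (u : nat -> R) (l1 l2 : R) : is_series u l1 -> is_series u l2 -> l1 = l2.
Proof. intros H1 H2. now rewrite <- (is_series_unique _ _ H1), <- (is_series_unique _ _ H2). Qed.

Lemma is_series_partial_le u l : (forall n, 0 <= u n) -> is_series u l ->
  forall N, sum_f_R0 u N <= l.
Proof. intros Hu Hs N. apply sum_incr; [apply is_series_Reals|]; assumption. Qed.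

Lemma is_series_term_le u l n : (forall n, 0 <= u n) -> is_series u l -> u n <= l.
Proof.
  intros Hu Hs. eapply Rle_trans; [|apply (is_series_partial_le u l Hu Hs n)].
  apply sum_f_R0_ge_term; auto.
Qed.

Lemma is_series_of_bounded_partial u B : (forall n, 0 <= u n) ->
  (forall N, sum_f_R0 u N <= B) -> exists l, is_series u l /\ l <= B.
Proof.
  intros Hu HB. destruct (growing_cv (sum_f_R0 u)) as [l Hl].
  - intros n. rewrite tech5. specialize (Hu (S n)). lra.
  - exists B. intros x [N ->]. apply HB.
  - exists l. split; [apply is_series_Reals; exact Hl|].
    apply Rnot_lt_le. intros Hlt. destruct (Hl (l - B) ltac:(lra)) as [N HN].
    specialize (HN N (Nat.le_refl N)). specialize (HB N).
    unfold Rdist in HN. apply Rabs_def2 in HN. lra.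
Qed.

Lemma is_series_partial_gt u l b : is_series u l -> b < l -> exists N, b < sum_f_R0 u N.
Proof.
  intros H Hl. apply is_series_Reals in H. destruct (H (l - b) ltac:(lra)) as [N HN].
  exists N. specialize (HN N (Nat.le_refl N)). unfold Rdist in HN.
  apply Rabs_def2 in HN. lra.
Qed.

Lemma CV_radius_ge_of_is_series a x l : 0 <= x -> (forall n, 0 <= a n) ->
  is_series (fun n => a n * x ^ n) l -> Rbar_le x (CV_radius a).
Proof.
  intros Hx Ha Hs. apply (proj1 (CV_radius_bounded a)). exists l. intros n.
  assert (Hnn : forall n, 0 <= a n * x ^ n)
    by (intros m; apply Rmult_le_pos; [apply Ha | apply pow_le; lra]).
  rewrite Rabs_pos_eq by apply Hnn. exact (is_series_term_le _ _ n Hnn Hs).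
Qed.

Lemma CV_radius_le_of_geometric_lower a m K lam : 0 < K -> 0 < lam ->
  (forall n, K * lam ^ n <= a (n + m)%nat) -> Rbar_le (CV_radius a) (/ lam).
Proof.
  intros HK Hlam Ha. apply (proj2 (CV_radius_bounded a)). intros r [M HM].
  simpl. apply Rnot_lt_le. intros Hr.
  assert (Hr0 : 0 < r) by (pose proof (Rinv_0_lt_compat _ Hlam); lra).
  assert (Hlr : 1 < lam * r).
  { apply Rmult_lt_compat_l with (r := lam) in Hr; [|exact Hlam].
    rewrite Rinv_r in Hr; lra. }
  assert (Hrm : 0 < K * r ^ m) by (apply Rmult_lt_0_compat; [|apply pow_lt]; lra).
  assert (Hgeo : forall n, K * r ^ m * (lam * r) ^ n <= M).
  { intros n. eapply Rle_trans; [|apply (HM (n + m)%nat)].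
    eapply Rle_trans; [|apply Rle_abs].
    rewrite Rpow_mult_distr, pow_add.
    assert (0 < r ^ n * r ^ m) by (apply Rmult_lt_0_compat; apply pow_lt; lra).
    specialize (Ha n). nra. }
  destruct (INR_unbounded (M / (K * r ^ m * (lam * r - 1)))) as [n Hn].
  assert (Hd : 0 < K * r ^ m * (lam * r - 1)) by (apply Rmult_lt_0_compat; lra).
  assert (M < K * r ^ m * (lam * r - 1) * INR n).
  { apply Rmult_lt_reg_l with (/ (K * r ^ m * (lam * r - 1))); [apply Rinv_0_lt_compat; lra|].
    rewrite <- Rmult_assoc, Rinv_l, Rmult_1_l by lra. rewrite Rmult_comm. exact Hn. }
  pose proof (pow_ge_bernoulli (lam * r) n ltac:(lra)).
  specialize (Hgeo n). nra.
Qed.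

Lemma Rbar_le_inv_limit (R : Rbar) L : 0 < L ->
  (forall lam, 0 < lam < L -> Rbar_le R (/ lam)) -> Rbar_le R (/ L).
Proof.
  intros HL H. destruct R as [r| |]; simpl; auto.
  - apply Rnot_lt_le. intros Hr.
    assert (HiL : 0 < / L) by (apply Rinv_0_lt_compat; lra).
    assert (Hir : / r < L).
    { rewrite <- (Rinv_inv L). apply Rinv_lt_contravar; [nra | lra]. }
    assert (0 < / r) by (apply Rinv_0_lt_compat; lra).
    specialize (H ((/ r + L) / 2) ltac:(lra)). simpl in H.
    assert (/ ((/ r + L) / 2) < / / r) by (apply Rinv_lt_contravar; nra).
    rewrite Rinv_inv in *. lra.
  - exact (H (L / 2) ltac:(lra)).
Qed.

Lemma Rbar_eq_of_squeeze (R : Rbar) r : 0 <= r -> Rbar_le 0 R -> Rbar_le R r ->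
  (forall x, 0 <= x < r -> Rbar_le x R) -> R = Finite r.
Proof.
  intros Hr H0 H1 H2. destruct R as [R| |]; simpl in *; try contradiction.
  f_equal. apply Rle_antisym; [exact H1|]. apply Rnot_lt_le. intros HR.
  specialize (H2 ((R + r) / 2) ltac:(lra)). simpl in H2. lra.
Qed.

Section NonnegPowerSeries.
Variable a : nat -> R.
Hypothesis a_ge0 : forall n, 0 <= a n.
Hypothesis a_0 : a 0%nat = 0.

Lemma pseries_term_ge0 x n : 0 <= x -> 0 <= a n * x ^ n.
Proof. intros Hx. apply Rmult_le_pos; [apply a_ge0 | apply pow_le; exact Hx]. Qed.

Lemma pseries_partial_at_0 N : sum_f_R0 (fun n => a n * 0 ^ n) N = 0.
Proof. induction N as [|N IH]; simpl; [rewrite a_0|rewrite IH]; ring. Qed.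

Lemma pseries_at_0 l : is_series (fun n => a n * 0 ^ n) l -> l = 0.
Proof.
  intros H. apply is_series_unique in H. rewrite <- H.
  apply is_series_unique, is_series_of_partial_const, pseries_partial_at_0.
Qed.

Lemma pseries_below x y ly : 0 <= x <= y -> is_series (fun n => a n * y ^ n) ly ->
  exists lx, is_series (fun n => a n * x ^ n) lx /\ lx <= ly.
Proof.
  intros Hxy Hy. apply is_series_of_bounded_partial; [intros; apply pseries_term_ge0; lra|].
  intros N. eapply Rle_trans;
    [|exact (is_series_partial_le _ _ (fun n => pseries_term_ge0 y n ltac:(lra)) Hy N)].
  apply sum_Rle. intros n _. apply Rmult_le_compat_l; [apply a_ge0|]. apply pow_incr. exact Hxy.
Qed.

Lemma pseries_lt k x y lx ly : 0 < a k -> 0 <= x < y ->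
  is_series (fun n => a n * x ^ n) lx -> is_series (fun n => a n * y ^ n) ly -> lx < ly.
Proof.
  intros Hk Hxy Hx Hy.
  assert (Hk1 : (1 <= k)%nat) by (destruct k; [rewrite a_0 in Hk; lra | lia]).
  pose proof (is_series_minus _ _ _ _ Hy Hx) as Hm.
  assert (Hnn : forall n, 0 <= plus (a n * y ^ n) (opp (a n * x ^ n))).
  { intros n. change (0 <= a n * y ^ n - a n * x ^ n).
    assert (x ^ n <= y ^ n) by (apply pow_incr; lra). specialize (a_ge0 n). nra. }
  pose proof (is_series_term_le _ _ k Hnn Hm) as T.
  change (a k * y ^ k - a k * x ^ k <= ly - lx) in T.
  assert (x ^ k < y ^ k).
  { destruct k as [|k]; [lia|]. simpl.
    assert (x ^ k <= y ^ k) by (apply pow_incr; lra).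
    assert (0 < y ^ k) by (apply pow_lt; lra). nra. }
  nra.
Qed.

Lemma pseries_partial_gt_1_below s N : 0 < s -> 1 < sum_f_R0 (fun n => a n * s ^ n) N ->
  exists s', 0 < s' < s /\ 1 < sum_f_R0 (fun n => a n * s' ^ n) N.
Proof.
  intros Hs HN. set (S := sum_f_R0 (fun n => a n * s ^ n) N) in HN.
  assert (HiS : 0 <= / S < 1).
  { split; [left; apply Rinv_0_lt_compat; lra|].
    rewrite <- Rinv_1. apply Rinv_lt_contravar; lra. }
  destruct (pow_gt_near_one (/ S) N HiS) as [t [Ht HtN]].
  exists (t * s). split; [split; [apply Rmult_lt_0_compat|]; nra|].
  apply Rlt_le_trans with (t ^ N * S).
  - apply Rmult_lt_reg_l with (/ S); [apply Rinv_0_lt_compat; lra|].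
    rewrite Rmult_1_r, (Rmult_comm (t ^ N)), <- Rmult_assoc, Rinv_l, Rmult_1_l by lra. exact HtN.
  - unfold S. rewrite scal_sum. apply sum_Rle. intros n Hn. rewrite Rpow_mult_distr.
    assert (t ^ N <= t ^ n).
    { replace N with (n + (N - n))%nat by lia. rewrite pow_add.
      assert (t ^ (N - n) <= 1) by (rewrite <- (pow1 (N - n)); apply pow_incr; lra).
      pose proof (pow_le t n ltac:(lra)). nra. }
    pose proof (pseries_term_ge0 s n ltac:(lra)). nra.
Qed.

(* The partial sum is first pushed strictly inside the disc of convergence, where the sum is
   continuous, and then the intermediate value theorem applies on [0, s']. *)
Lemma pseries_eq_one_below s N : 0 < s -> Rbar_le s (CV_radius a) ->
  1 < sum_f_R0 (fun n => a n * s ^ n) N ->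
  exists r, 0 < r < s /\ is_series (fun n => a n * r ^ n) 1.
Proof.
  intros Hs HR HN. destruct (pseries_partial_gt_1_below s N Hs HN) as [s' [Hs' Hpart]].
  assert (Hin : forall x, 0 <= x <= s' -> Rbar_lt (Rabs x) (CV_radius a)).
  { intros x Hx. rewrite Rabs_pos_eq by lra.
    destruct (CV_radius a) as [R| |]; simpl in *; auto; lra. }
  assert (Hser : forall x, 0 <= x <= s' -> is_series (fun n => a n * x ^ n) (PSeries a x)).
  { intros x Hx. apply is_pseries_R, PSeries_correct, CV_radius_inside, Hin, Hx. }
  assert (Hf1 : 1 < PSeries a s').
  { eapply Rlt_le_trans; [apply Hpart|].
    apply is_series_partial_le; [intros; apply pseries_term_ge0; lra | apply Hser; lra]. }
  destruct (Ranalysis5.IVT_interv (fun x => PSeries a x - 1) 0 s') as [r [Hr Hfr]].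
  - intros x Hx. apply continuity_pt_minus.
    + apply PSeries_continuity, Hin, Hx.
    + apply continuity_pt_const. intros u v; reflexivity.
  - lra.
  - rewrite PSeries_0, a_0. lra.
  - lra.
  - assert (r <> 0) by (intros ->; rewrite PSeries_0, a_0 in Hfr; lra).
    exists r. split; [lra|]. replace 1 with (PSeries a r) by lra. apply Hser. lra.
Qed.

End NonnegPowerSeries.

Section Inverse.
Variables (c d : nat) (p : Z -> R) (q : R).
Local Notation a := (Qcoef c d p q).
Local Notation Qp := (Qpow c d p q).
Hypothesis a_ge0 : forall n, 0 <= a n.

Lemma Qpow_ge0 k n : 0 <= Qp k n.
Proof.
  revert n. induction k as [|k IH]; intros n; simpl.
  - destruct (Nat.eqb n 0); lra.
  - apply cond_pos_sum. intros i. apply Rmult_le_pos; auto.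
Qed.

Lemma Qpow_below k n : (n < k)%nat -> Qp k n = 0.
Proof.
  revert n. induction k as [|k IH]; intros n Hn; [lia|]. simpl.
  apply sum_eq_R0. intros [|i] Hi; [simpl; ring|]. rewrite IH by lia. ring.
Qed.

Lemma Qpow_1 n : Qp 1 n = a n.
Proof.
  destruct n as [|n]; [simpl; ring|].
  change (sum_f_R0 (fun i => a i * Qp 0 (S n - i)) (S n) = a (S n)).
  rewrite tech5, Nat.sub_diag, sum_eq_R0; [simpl; ring|].
  intros i Hi. change (Qp 0 (S n - i)) with (if Nat.eqb (S n - i) 0 then 1 else 0).
  replace (Nat.eqb (S n - i) 0) with false by (symmetry; apply Nat.eqb_neq; lia). ring.
Qed.

Lemma Dcoef_ge_partial K n : sum_f_R0 (fun k => Qp k n) K <= Dcoef c d p q n.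
Proof.
  unfold Dcoef. destruct (le_lt_dec n K) as [HnK|HKn].
  - induction HnK as [|K HnK IH]; [lra|].
    rewrite tech5, (Qpow_below (S K) n) by lia. lra.
  - apply sum_f_R0_mono_N; [intros; apply Qpow_ge0 | lia].
Qed.

Lemma Qcoef_le_Dcoef n : a n <= Dcoef c d p q n.
Proof.
  rewrite <- Qpow_1. eapply Rle_trans; [|apply (Dcoef_ge_partial 1)].
  change (sum_f_R0 (fun k => Qp k n) 1) with (Qp 0 n + Qp 1 n).
  pose proof (Qpow_ge0 0 n). lra.
Qed.

Lemma Qpow_series k x l : 0 <= x -> is_series (fun n => a n * x ^ n) l ->
  is_series (fun n => Qp k n * x ^ n) (l ^ k).
Proof.
  intros Hx Hl. induction k as [|k IH].
  - apply is_series_of_partial_const. intros N.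
    induction N as [|N IHN]; [simpl; ring|]. rewrite tech5, IHN. simpl. ring.
  - eapply is_series_ext;
      [|apply (is_series_mult_pos _ _ _ _ Hl IH); intros; apply Rmult_le_pos;
        try apply Qpow_ge0; try apply a_ge0; apply pow_le; exact Hx].
    intros n. simpl. rewrite Rmult_comm, scal_sum. apply sum_eq. intros i Hi.
    replace (x ^ n) with (x ^ i * x ^ (n - i)) by (rewrite <- pow_add; f_equal; lia).
    ring.
Qed.

Lemma Dcoef_radius_ge x l : 0 <= x -> is_series (fun n => a n * x ^ n) l -> l < 1 ->
  Rbar_le x (CV_radius (Dcoef c d p q)).
Proof.
  intros Hx Hl Hl1.
  assert (Hnn : forall n, 0 <= a n * x ^ n) by (intros; apply pseries_term_ge0; auto).
  assert (Hl0 : 0 <= l)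
    by (eapply Rle_trans; [apply (Hnn 0%nat) | apply (is_series_term_le _ _ 0 Hnn Hl)]).
  apply (proj1 (CV_radius_bounded _)). exists (/ (1 - l)). intros N.
  rewrite Rabs_pos_eq
    by (apply Rmult_le_pos; [apply cond_pos_sum; intros; apply Qpow_ge0 | apply pow_le; exact Hx]).
  unfold Dcoef. rewrite Rmult_comm, scal_sum.
  apply Rle_trans with (sum_f_R0 (fun k => l ^ k) N).
  - apply sum_Rle. intros k _.
    apply (is_series_term_le (fun n => Qp k n * x ^ n)); [|now apply Qpow_series].
    intros m. apply Rmult_le_pos; [apply Qpow_ge0 | apply pow_le; exact Hx].
  - rewrite tech3 by lra. unfold Rdiv.
    rewrite <- (Rmult_1_l (/ (1 - l))) at 2.
    apply Rmult_le_compat_r; [left; apply Rinv_0_lt_compat; lra|].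
    pose proof (pow_le l (S N) Hl0). lra.
Qed.

Lemma Dcoef_radius_le_Qcoef : Rbar_le (CV_radius (Dcoef c d p q)) (CV_radius a).
Proof.
  apply (proj2 (CV_radius_bounded _)). intros r [M HM].
  apply (proj1 (CV_radius_bounded a)). exists M. intros n.
  eapply Rle_trans; [|apply (HM n)]. rewrite !Rabs_mult.
  apply Rmult_le_compat_r; [apply Rabs_pos|].
  pose proof (Qcoef_le_Dcoef n). rewrite !Rabs_pos_eq; auto. specialize (a_ge0 n). lra.
Qed.

(* Each Q^k contributes 1 at r, so D diverges there. *)
Lemma Dcoef_radius_le r : 0 < r -> is_series (fun n => a n * r ^ n) 1 ->
  Rbar_le (CV_radius (Dcoef c d p q)) r.
Proof.
  intros Hr H1.
  destruct (Rbar_le_lt_dec (CV_radius (Dcoef c d p q)) r) as [H|H]; [exact H|exfalso].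
  assert (HD : ex_series (fun n => Dcoef c d p q n * r ^ n)).
  { destruct (CV_radius_inside (Dcoef c d p q) r) as [l Hl]; [now rewrite Rabs_pos_eq by lra|].
    exists l. now apply is_pseries_R. }
  assert (HK : forall K, is_series (fun n => sum_f_R0 (fun k => Qp k n) K * r ^ n) (INR (S K))).
  { induction K as [|K IH].
    - simpl. rewrite <- (pow1 0). now apply Qpow_series; [lra|].
    - rewrite S_INR.
      replace (INR (S K) + 1) with (plus (INR (S K)) (1 ^ S K)) by (now rewrite pow1).
      eapply is_series_ext;
        [|exact (is_series_plus _ _ _ _ IH (Qpow_series (S K) r 1 ltac:(lra) H1))].
      intros n. change (plus ?x ?y) with (x + y). simpl. ring. }
  destruct (INR_unbounded (Series (fun n => Dcoef c d p q n * r ^ n))) as [K HKD].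
  assert (Series (fun n => sum_f_R0 (fun k => Qp k n) K * r ^ n)
          <= Series (fun n => Dcoef c d p q n * r ^ n)).
  { apply Series_le; [|exact HD]. intros n. pose proof (pow_le r n ltac:(lra)). split.
    - apply Rmult_le_pos; [apply cond_pos_sum; intros; apply Qpow_ge0 | lra].
    - apply Rmult_le_compat_r; [lra | apply Dcoef_ge_partial]. }
  rewrite (is_series_unique _ _ (HK K)), S_INR in *. lra.
Qed.

End Inverse.

Lemma sumR_app l1 l2 : sumR (l1 ++ l2) = sumR l1 + sumR l2.
Proof. induction l1 as [|x l1 IH]; simpl; [|rewrite IH]; ring. Qed.

Lemma sumR_map_filter {A} (P : A -> bool) (g : A -> R) l :
  sumR (map g (filter P l)) = sumR (map (fun x => if P x then g x else 0) l).
Proof. induction l as [|x l IH]; simpl; [|destruct (P x); simpl; rewrite IH]; ring. Qed.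

Lemma sumR_map_flat_map {A B} (F : A -> list B) (g : B -> R) l :
  sumR (map g (flat_map F l)) = sumR (map (fun x => sumR (map g (F x))) l).
Proof. induction l as [|x l IH]; simpl; [|rewrite map_app, sumR_app, IH]; reflexivity. Qed.

Lemma sumR_map_scal {A} (a : R) (f : A -> R) l :
  sumR (map (fun x => a * f x) l) = a * sumR (map f l).
Proof. induction l as [|x l IH]; simpl; [|rewrite IH]; ring. Qed.

Lemma sumR_map_0 {A} (l : list A) : sumR (map (fun _ => 0) l) = 0.
Proof. induction l as [|x l IH]; simpl; [|rewrite IH]; ring. Qed.

Lemma sumR_map_seq (g : nat -> R) N : sumR (map g (seq 0 (S N))) = sum_f_R0 g N.
Proof.
  induction N as [|N IH]; [simpl; ring|].
  rewrite seq_S, map_app, sumR_app, IH. simpl. ring.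
Qed.

Section Walks.
Variables (c d : nat) (p : Z -> R).
Hypothesis p_ge0 : forall i : Z, (- Z.of_nat c <= i <= Z.of_nat d)%Z -> 0 <= p i.

Lemma zsum_ext f g : (forall i, (- Z.of_nat c <= i <= Z.of_nat d)%Z -> f i = g i) ->
  zsum c d f = zsum c d g.
Proof. intros H. apply sum_eq. intros k Hk. apply H. lia. Qed.

Lemma zsum_plus f g : zsum c d (fun i => f i + g i) = zsum c d f + zsum c d g.
Proof. apply sum_plus. Qed.

Lemma zsum_minus f g : zsum c d (fun i => f i - g i) = zsum c d f - zsum c d g.
Proof. apply minus_sum. Qed.

Lemma zsum_scal a f : zsum c d (fun i => a * f i) = a * zsum c d f.
Proof. unfold zsum. rewrite scal_sum. apply sum_eq. intros; ring. Qed.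

Lemma zsum_le f g : (forall i, (- Z.of_nat c <= i <= Z.of_nat d)%Z -> f i <= g i) ->
  zsum c d f <= zsum c d g.
Proof. intros H. apply sum_Rle. intros k Hk. apply H. lia. Qed.

Lemma zsum_ge0 f : (forall i, (- Z.of_nat c <= i <= Z.of_nat d)%Z -> 0 <= f i) ->
  0 <= zsum c d f.
Proof. intros H. apply sum_f_R0_ge0. intros j Hj. apply H. lia. Qed.

Lemma zsum_ge_term f j : (- Z.of_nat c <= j <= Z.of_nat d)%Z ->
  (forall i, (- Z.of_nat c <= i <= Z.of_nat d)%Z -> 0 <= f i) -> f j <= zsum c d f.
Proof.
  intros Hj H. unfold zsum.
  replace j with (- Z.of_nat c + Z.of_nat (Z.to_nat (j + Z.of_nat c)))%Z at 1 by lia.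
  apply (sum_f_R0_ge_term (fun k => f (- Z.of_nat c + Z.of_nat k)%Z)); [intros; apply H|]; lia.
Qed.

Definition step_op (f : Z -> R) (h : Z) : R :=
  zsum c d (fun i => if (0 <=? h + i)%Z then p i * f (h + i)%Z else 0).

Fixpoint walk_sum (n : nat) (f : Z -> R) (h : Z) : R :=
  match n with O => f h | S n' => step_op (walk_sum n' f) h end.

Lemma step_op_le_on f g h : (forall k, (0 <= k <= h + Z.of_nat d)%Z -> f k <= g k) ->
  step_op f h <= step_op g h.
Proof.
  intros H. apply zsum_le. intros i Hi.
  destruct (0 <=? h + i)%Z eqn:E; [|lra]. apply Z.leb_le in E.
  apply Rmult_le_compat_l; [apply p_ge0; lia | apply H; lia].
Qed.

Lemma step_op_lin a b f g h :
  step_op (fun k => a * f k + b * g k) h = a * step_op f h + b * step_op g h.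
Proof.
  unfold step_op. rewrite <- !zsum_scal, <- zsum_plus. apply zsum_ext. intros i _.
  destruct (0 <=? h + i)%Z; ring.
Qed.

Lemma walk_sum_S n f h : walk_sum (S n) f h = walk_sum n (step_op f) h.
Proof.
  revert h. induction n as [|n IH]; intros h; [reflexivity|].
  change (step_op (walk_sum (S n) f) h = step_op (walk_sum n (step_op f)) h).
  f_equal. extensionality k. apply IH.
Qed.

Lemma walk_sum_add n m f h : walk_sum (n + m) f h = walk_sum n (walk_sum m f) h.
Proof.
  revert h. induction n as [|n IH]; intros h; [reflexivity|].
  simpl. f_equal. extensionality k. apply IH.
Qed.

Lemma walk_sum_lin n a b f g h :
  walk_sum n (fun k => a * f k + b * g k) h = a * walk_sum n f h + b * walk_sum n g h.
Proof.
  revert h. induction n as [|n IH]; intros h; [reflexivity|].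
  simpl. rewrite <- step_op_lin. f_equal. extensionality k. apply IH.
Qed.

Lemma walk_sum_scal n a f h : walk_sum n (fun k => a * f k) h = a * walk_sum n f h.
Proof.
  replace (fun k => a * f k) with (fun k => a * f k + 0 * f k) by (extensionality k; ring).
  rewrite walk_sum_lin. ring.
Qed.

Lemma walk_sum_0 n h : walk_sum n (fun _ => 0) h = 0.
Proof.
  replace (fun _ : Z => 0) with (fun _ : Z => 0 * 0) by (extensionality k; ring).
  rewrite walk_sum_scal. ring.
Qed.

Lemma walk_sum_sub n f g h : walk_sum n (fun k => f k - g k) h = walk_sum n f h - walk_sum n g h.
Proof.
  replace (fun k => f k - g k) with (fun k => 1 * f k + (-1) * g k) by (extensionality k; ring).
  rewrite walk_sum_lin. ring.
Qed.

Lemma walk_sum_sum n (F : nat -> Z -> R) N h :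
  walk_sum n (fun k => sum_f_R0 (fun j => F j k) N) h = sum_f_R0 (fun j => walk_sum n (F j) h) N.
Proof.
  induction N as [|N IH]; [reflexivity|]. simpl. rewrite <- IH.
  replace (fun k => sum_f_R0 (fun j => F j k) N + F (S N) k)
    with (fun k => 1 * sum_f_R0 (fun j => F j k) N + 1 * F (S N) k) by (extensionality k; ring).
  rewrite walk_sum_lin. ring.
Qed.

Lemma walk_sum_le_on n f g h : (0 <= h)%Z ->
  (forall k, (0 <= k <= h + Z.of_nat n * Z.of_nat d)%Z -> f k <= g k) ->
  walk_sum n f h <= walk_sum n g h.
Proof.
  revert h. induction n as [|n IH]; intros h Hh H; simpl.
  - apply H. lia.
  - apply step_op_le_on. intros k Hk. apply IH; [lia|]. intros k' Hk'. apply H. lia.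
Qed.

Lemma walk_sum_le n f g h : (forall k, (0 <= k)%Z -> f k <= g k) -> (0 <= h)%Z ->
  walk_sum n f h <= walk_sum n g h.
Proof. intros H Hh. apply walk_sum_le_on; [exact Hh|]. intros k Hk. apply H. lia. Qed.

Lemma walk_sum_ge0 n f h : (forall k, (0 <= k)%Z -> 0 <= f k) -> (0 <= h)%Z ->
  0 <= walk_sum n f h.
Proof. intros H Hh. rewrite <- (walk_sum_0 n h). now apply walk_sum_le. Qed.

End Walks.

Section Paths.
Variables (c d : nat) (p : Z -> R).

Lemma walk_sum_words n : forall h (f : Z -> R),
  sumR (map (fun w => if stays_nonneg h w then weight p w * f (h + endpoint w)%Z else 0)
    (words c d p n)) = walk_sum c d p n f h.
Proof.
  induction n as [|n IH]; intros h f.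
  - simpl. rewrite Z.add_0_r. ring.
  - simpl words. rewrite sumR_map_flat_map. simpl walk_sum.
    rewrite (map_ext _ (fun i => if (0 <=? h + i)%Z then p i * walk_sum c d p n f (h + i) else 0)).
    2:{ intros i. rewrite map_map. simpl. destruct (0 <=? h + i)%Z; simpl.
        - rewrite <- IH, <- sumR_map_scal. f_equal. apply map_ext. intros w.
          destruct (stays_nonneg (h + i) w); [rewrite Z.add_assoc|]; ring.
        - apply sumR_map_0. }
    unfold jumps. rewrite sumR_map_filter, map_map, sumR_map_seq. apply sum_eq. intros k _.
    destruct (Req_dec_T (p (- Z.of_nat c + Z.of_nat k)%Z) 0) as [E|E]; [|reflexivity].
    rewrite E. destruct (0 <=? _)%Z; ring.
Qed.

Lemma Mcoef_walk_sum n : Mcoef c d p n = walk_sum c d p n (fun _ => 1) 0%Z.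
Proof.
  rewrite <- walk_sum_words. unfold Mcoef. rewrite sumR_map_filter. f_equal.
  apply map_ext. intros w. destruct (stays_nonneg 0 w); ring.
Qed.

Lemma mnk_walk_sum n k :
  mnk c d p n k = walk_sum c d p n (fun e => if (e =? k)%Z then 1 else 0) 0%Z.
Proof.
  rewrite <- walk_sum_words. unfold mnk. rewrite sumR_map_filter. f_equal.
  apply map_ext. intros w. destruct (stays_nonneg 0 w); simpl; [|reflexivity].
  destruct (endpoint w =? k)%Z; ring.
Qed.

Definition negjump_ind (N : nat) (e : Z) : R :=
  sum_f_R0 (fun j => if Req_dec_T (p (- Z.of_nat (S j))%Z) 0 then 0
                     else if (e =? Z.of_nat (S j))%Z then 1 else 0) N.

(* For e >= 0, [catastrophe_ind e] is 1 if a catastrophe may start at altitude e (that is, e > 0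
   and -e is not a jump) and 0 otherwise. *)
Definition catastrophe_ind (e : Z) : R :=
  1 - (if (e =? 0)%Z then 1 else 0) - negjump_ind (c - 1) e.

Lemma negjump_ind_bounds N e :
  0 <= negjump_ind N e <= 1 /\ ((e <= 0)%Z \/ (Z.of_nat (S N) < e)%Z -> negjump_ind N e = 0).
Proof.
  induction N as [|N [[H0 H1] Hout]]; unfold negjump_ind in *.
  - simpl. destruct (Req_dec_T _ 0); [split; [lra | reflexivity]|].
    destruct (Z.eqb_spec e 1); (split; [lra|]); intros; [lia | reflexivity].
  - rewrite tech5. destruct (Req_dec_T _ 0).
    + split; [lra|]. intros HH. rewrite Hout by lia. ring.
    + destruct (Z.eqb_spec e (Z.of_nat (S (S N)))) as [E|E].
      * rewrite Hout by lia. split; [lra|]. intros; lia.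
      * split; [lra|]. intros HH. rewrite Hout by lia. ring.
Qed.

Lemma catastrophe_ind_bounds e : (1 <= c)%nat -> (0 <= e)%Z ->
  0 <= catastrophe_ind e <= 1 /\ ((Z.of_nat c < e)%Z -> catastrophe_ind e = 1).
Proof.
  intros Hc He. unfold catastrophe_ind. destruct (negjump_ind_bounds (c - 1) e) as [Hb Hout].
  destruct (Z.eqb_spec e 0).
  - rewrite Hout by lia. split; [lra|]. intros; lia.
  - split; [lra|]. intros Hlt. rewrite Hout by lia. ring.
Qed.

Lemma Qcoef_walk_sum q n : Qcoef c d p q (S n) = q * walk_sum c d p n catastrophe_ind 0%Z.
Proof.
  unfold catastrophe_ind, negjump_ind. rewrite !walk_sum_sub, walk_sum_sum.
  cbn [Qcoef]. rewrite Mcoef_walk_sum, mnk_walk_sum. do 2 f_equal.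
  apply sum_eq. intros j _. destruct (Req_dec_T _ 0).
  - now rewrite walk_sum_0.
  - apply mnk_walk_sum.
Qed.

End Paths.

Lemma powerRZ_ge_tangent_1 i x : 0 < x -> 1 + IZR i * (x - 1) <= powerRZ x i /\
  ((i < 0)%Z -> x <> 1 -> 1 + IZR i * (x - 1) < powerRZ x i).
Proof.
  intros Hx. destruct i as [|n|n]; cbn [powerRZ].
  - split; [lra | intros; lia].
  - split; [|intros; lia].
    replace (IZR (Z.pos n)) with (INR (Pos.to_nat n)) by now rewrite INR_IZR_INZ, positive_nat_Z.
    apply pow_ge_bernoulli. lra.
  - rewrite <- pow_inv.
    pose proof (pow_ge_bernoulli (/ x) (Pos.to_nat n) ltac:(left; apply Rinv_0_lt_compat; lra)).
    replace (IZR (Z.neg n)) with (- INR (Pos.to_nat n))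
      by now rewrite INR_IZR_INZ, positive_nat_Z, <- opp_IZR.
    assert (1 <= INR (Pos.to_nat n)) by (apply (le_INR 1); lia).
    assert (E : / x - 1 - (1 - x) = (x - 1) * (x - 1) / x) by (field; lra).
    assert (0 <= (x - 1) * (x - 1) / x)
      by (apply Rmult_le_pos; [apply Rle_0_sqr | left; apply Rinv_0_lt_compat; lra]).
    split; [nra|]. intros _ Hx1.
    assert (0 < (x - 1) * (x - 1) / x).
    { apply Rmult_lt_0_compat; [|apply Rinv_0_lt_compat; lra].
      assert (x - 1 <> 0) by lra. nra. }
    nra.
Qed.

Lemma powerRZ_ge_tangent i u t : 0 < u -> 0 < t ->
  powerRZ t i + IZR i * powerRZ t (i - 1) * (u - t) <= powerRZ u i /\
  ((i < 0)%Z -> u <> t -> powerRZ t i + IZR i * powerRZ t (i - 1) * (u - t) < powerRZ u i).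
Proof.
  intros Hu Ht. set (x := u / t).
  assert (Hx : 0 < x) by (apply Rdiv_lt_0_compat; lra).
  assert (Eu : u = t * x) by (unfold x; field; lra).
  assert (Et : powerRZ t i = powerRZ t (i - 1) * t).
  { replace i with (i - 1 + 1)%Z at 1 by lia. rewrite powerRZ_add by lra. simpl. ring. }
  assert (Hti : 0 < powerRZ t (i - 1) * t) by (apply Rmult_lt_0_compat; [apply powerRZ_lt|]; lra).
  assert (E : powerRZ u i - (powerRZ t i + IZR i * powerRZ t (i - 1) * (u - t))
     = powerRZ t (i - 1) * t * (powerRZ x i - (1 + IZR i * (x - 1)))).
  { rewrite Eu, powerRZ_mult, Et. ring. }
  destruct (powerRZ_ge_tangent_1 i x Hx) as [K1 K2]. split; [nra|].
  intros Hi Hut. assert (x <> 1) by (intros Hx1; apply Hut; rewrite Eu, Hx1; ring).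
  specialize (K2 Hi H). nra.
Qed.

Lemma powerRZ_ge_1 t k : 1 <= t -> (0 <= k)%Z -> 1 <= powerRZ t k.
Proof.
  intros Ht Hk. replace k with (Z.of_nat (Z.to_nat k)) by lia.
  rewrite <- pow_powerRZ. apply pow_R1_Rle, Ht.
Qed.

Definition bump (tau : R) (L : nat) (k : Z) : R :=
  powerRZ tau k * Rmax 0 ((IZR k + 1) * (INR L + 1 - IZR k)).

Lemma bump_ge0 tau L k : 0 < tau -> 0 <= bump tau L k.
Proof. intros Ht. apply Rmult_le_pos; [apply powerRZ_le; lra | apply Rmax_l]. Qed.

Lemma bump_outside tau L k : (k < 0 \/ Z.of_nat L < k)%Z -> bump tau L k = 0.
Proof.
  intros Hk. unfold bump. rewrite Rmax_left; [ring|]. pose proof (pos_INR L).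
  destruct Hk as [Hk|Hk].
  - assert (Hk1 : (k <= -1)%Z) by lia. apply IZR_le in Hk1. nra.
  - assert (Hk1 : (Z.of_nat L + 1 <= k)%Z) by lia. apply IZR_le in Hk1.
    rewrite plus_IZR, <- INR_IZR_INZ in Hk1. nra.
Qed.

Lemma bump_le tau L k : 0 < tau -> bump tau L k <= (1 + tau) ^ L * ((INR L + 1) * (INR L + 1)).
Proof.
  intros Ht. pose proof (pos_INR L). assert (0 < (1 + tau) ^ L) by (apply pow_lt; lra).
  destruct (Z_lt_le_dec k 0) as [Hk|Hk]; [rewrite bump_outside by lia; nra|].
  destruct (Z_lt_le_dec (Z.of_nat L) k) as [HkL|HkL]; [rewrite bump_outside by lia; nra|].
  unfold bump. apply Rmult_le_compat; [apply powerRZ_le; lra | apply Rmax_l | |].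
  - replace k with (Z.of_nat (Z.to_nat k)) by lia. rewrite <- pow_powerRZ.
    apply Rle_trans with ((1 + tau) ^ Z.to_nat k); [apply pow_incr; lra|].
    apply Rle_pow; [lra | lia].
  - apply IZR_le in Hk, HkL. rewrite <- INR_IZR_INZ in HkL.
    apply Rmax_lub; [nra|]. apply Rmult_le_compat; lra.
Qed.

Lemma bump_0 tau L : bump tau L 0 = INR L + 1.
Proof.
  unfold bump. simpl. pose proof (pos_INR L). rewrite Rmax_right; [ring | lra].
Qed.

Section Growth.
Variables (c d : nat) (p : Z -> R).
Hypothesis p_ge0 : forall i : Z, (- Z.of_nat c <= i <= Z.of_nat d)%Z -> 0 <= p i.
Hypothesis p_low : p (- Z.of_nat c)%Z <> 0.
Hypothesis p_high : p (Z.of_nat d) <> 0.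

Local Notation P := (Pjump c d p).
Local Notation P' := (Pjump' c d p).
Local Notation step_op := (step_op c d p).
Local Notation walk_sum := (walk_sum c d p).

Lemma p_low_pos : 0 < p (- Z.of_nat c)%Z.
Proof. pose proof (p_ge0 (- Z.of_nat c)%Z ltac:(lia)). lra. Qed.

Lemma p_high_pos : 0 < p (Z.of_nat d).
Proof. pose proof (p_ge0 (Z.of_nat d) ltac:(lia)). lra. Qed.

(* Strictness comes from the lowest jump -c < 0 alone. *)
Lemma Pjump_gt_tangent u t : (1 <= c)%nat -> 0 < u -> 0 < t -> u <> t ->
  P t + P' t * (u - t) < P u.
Proof.
  intros Hc Hu Ht Hut.
  assert (E : zsum c d (fun i => p i * (powerRZ u i
                                         - (powerRZ t i + IZR i * powerRZ t (i - 1) * (u - t))))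
            = P u - (P t + P' t * (u - t))).
  { unfold Pjump, Pjump'. rewrite Rmult_comm, <- zsum_scal, <- zsum_plus, <- zsum_minus.
    apply zsum_ext. intros; ring. }
  apply Rlt_0_minus. rewrite <- E.
  eapply Rlt_le_trans; [|apply zsum_ge_term with (j := (- Z.of_nat c)%Z)]; [| lia |].
  - pose proof p_low_pos.
    destruct (powerRZ_ge_tangent (- Z.of_nat c) u t Hu Ht) as [_ T]. specialize (T ltac:(lia) Hut).
    nra.
  - intros i Hi. pose proof (p_ge0 i Hi).
    destruct (powerRZ_ge_tangent i u t Hu Ht) as [T _]. nra.
Qed.

Lemma Pjump_pos u : 0 < u -> 0 < P u.
Proof.
  intros Hu. eapply Rlt_le_trans; [|apply zsum_ge_term with (j := (- Z.of_nat c)%Z)]; [| lia |].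
  - apply Rmult_lt_0_compat; [apply p_low_pos | apply powerRZ_lt; lra].
  - intros i Hi. apply Rmult_le_pos; [apply p_ge0; auto | apply powerRZ_le; lra].
Qed.

Lemma zsum_IZR_powerRZ t : 0 < t -> zsum c d (fun i => IZR i * p i * powerRZ t i) = t * P' t.
Proof.
  intros Ht. unfold Pjump'. rewrite <- zsum_scal. apply zsum_ext. intros i _.
  replace i with (i - 1 + 1)%Z at 3 by lia. rewrite powerRZ_add by lra. simpl. ring.
Qed.

Lemma step_op_le_zsum f h : (0 <= h)%Z -> (forall k, (- Z.of_nat c <= k < 0)%Z -> 0 <= f k) ->
  step_op f h <= zsum c d (fun i => p i * f (h + i)%Z).
Proof.
  intros Hh H. apply zsum_le. intros i Hi.
  destruct (0 <=? h + i)%Z eqn:E; [lra|]. apply Z.leb_gt in E.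
  apply Rmult_le_pos; [apply p_ge0 | apply H]; lia.
Qed.

Lemma zsum_le_step_op f h : (forall k, (k < 0)%Z -> f k <= 0) ->
  zsum c d (fun i => p i * f (h + i)%Z) <= step_op f h.
Proof.
  intros H. apply zsum_le. intros i Hi.
  destruct (0 <=? h + i)%Z eqn:E; [lra|]. apply Z.leb_gt in E.
  pose proof (p_ge0 i Hi). pose proof (H (h + i)%Z E). nra.
Qed.

Lemma walk_sum_ge_pow g lam : 0 <= lam -> (forall k, (0 <= k)%Z -> 0 <= g k) ->
  (forall h, (0 <= h)%Z -> lam * g h <= step_op g h) ->
  forall n h, (0 <= h)%Z -> lam ^ n * g h <= walk_sum n g h.
Proof.
  intros Hl Hg HK n. induction n as [|n IH]; intros h Hh; [simpl; lra|].
  rewrite walk_sum_S. apply Rle_trans with (walk_sum n (fun k => lam * g k) h).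
  - rewrite walk_sum_scal. simpl. rewrite Rmult_assoc. apply Rmult_le_compat_l; auto.
  - apply walk_sum_le; auto.
Qed.

(* Foster-Lyapunov bound: iterating the drift inequality of F controls the walk counts
   discounted by lam. *)
Lemma walk_sum_lyapunov F lam gam : 0 < lam -> (forall k, (0 <= k)%Z -> 0 <= F k) ->
  (forall h, (0 <= h)%Z -> step_op F h <= lam * F h - gam) ->
  forall N h, (0 <= h)%Z ->
  gam * sum_f_R0 (fun m => / lam ^ S m * walk_sum m (fun _ => 1) h) N
    + / lam ^ S N * walk_sum (S N) F h <= F h.
Proof.
  intros Hl HF HK N. induction N as [|N IH]; intros h Hh.
  - specialize (HK h Hh). simpl. rewrite Rmult_1_r, Rmult_1_r.
    apply Rmult_le_compat_l with (r := / lam) in HK; [|left; apply Rinv_0_lt_compat; lra].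
    replace (/ lam * (lam * F h - gam)) with (F h - gam * / lam) in HK by (field; lra).
    change (step_op (fun k => F k) h) with (step_op F h). lra.
  - specialize (IH h Hh). rewrite tech5.
    assert (Hstep : walk_sum (S (S N)) F h
                    <= lam * walk_sum (S N) F h - gam * walk_sum (S N) (fun _ => 1) h).
    { rewrite walk_sum_S.
      apply Rle_trans with (walk_sum (S N) (fun k => lam * F k + (- gam) * 1) h).
      - apply walk_sum_le; [exact p_ge0 | |lia]. intros k Hk. specialize (HK k Hk). lra.
      - rewrite walk_sum_lin. lra. }
    assert (Hp : 0 < lam ^ S N) by (apply pow_lt; lra).
    apply Rmult_le_compat_l with (r := / lam ^ S (S N)) in Hstep;
      [|left; apply Rinv_0_lt_compat, pow_lt; lra].
    replace (/ lam ^ S (S N) * (lam * walk_sum (S N) F h - gam * walk_sum (S N) (fun _ => 1) h))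
      with (/ lam ^ S N * walk_sum (S N) F h
            - gam * (/ lam ^ S (S N) * walk_sum (S N) (fun _ => 1) h)) in Hstep
      by (change (lam ^ S (S N)) with (lam * lam ^ S N); field; lra).
    lra.
Qed.

Lemma Pjump_1_ge0 : 0 <= P 1.
Proof.
  apply zsum_ge0. intros i Hi. rewrite powerRZ_R1, Rmult_1_r. apply p_ge0, Hi.
Qed.

Lemma walk_count_le_pow n h : (0 <= h)%Z -> walk_sum n (fun _ => 1) h <= P 1 ^ n.
Proof.
  revert h. induction n as [|n IH]; intros h Hh; [simpl; lra|].
  assert (Hstep : forall k, (0 <= k)%Z -> step_op (fun _ => 1) k <= P 1 * 1).
  { intros k _. rewrite Rmult_1_r. apply zsum_le. intros i Hi. rewrite powerRZ_R1.
    destruct (0 <=? k + i)%Z; [lra|]. rewrite Rmult_1_r. apply p_ge0, Hi. }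
  rewrite walk_sum_S.
  eapply Rle_trans; [apply walk_sum_le; [exact p_ge0 | exact Hstep | exact Hh]|].
  rewrite walk_sum_scal. simpl. apply Rmult_le_compat_l; [apply Pjump_1_ge0 | apply IH, Hh].
Qed.

Lemma walk_sum_ge_up m f e : (forall k, (0 <= k)%Z -> 0 <= f k) -> (0 <= e)%Z ->
  p (Z.of_nat d) ^ m * f (e + Z.of_nat m * Z.of_nat d)%Z <= walk_sum m f e.
Proof.
  intros Hf. revert e. induction m as [|m IH]; intros e He.
  - simpl. rewrite Z.add_0_r. lra.
  - simpl walk_sum. pose proof p_high_pos.
    eapply Rle_trans; [|apply zsum_ge_term with (j := Z.of_nat d)]; [| lia |].
    + replace (0 <=? e + Z.of_nat d)%Z with true by (symmetry; apply Z.leb_le; lia).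
      simpl pow. rewrite Rmult_assoc. apply Rmult_le_compat_l; [lra|].
      replace (e + Z.of_nat (S m) * Z.of_nat d)%Z with (e + Z.of_nat d + Z.of_nat m * Z.of_nat d)%Z
        by lia.
      apply IH. lia.
    + intros i Hi. destruct (0 <=? e + i)%Z eqn:E; [|lra]. apply Z.leb_le in E.
      apply Rmult_le_pos; [apply p_ge0, Hi | apply walk_sum_ge0; [exact p_ge0 | exact Hf | lia]].
Qed.

Lemma Qcoef_ge0 q n : (1 <= c)%nat -> 0 <= q -> 0 <= Qcoef c d p q n.
Proof.
  intros Hc Hq. destruct n as [|n]; [simpl; lra|]. rewrite Qcoef_walk_sum.
  apply Rmult_le_pos; [exact Hq|]. apply walk_sum_ge0; [exact p_ge0 | |lia].
  intros k Hk. apply catastrophe_ind_bounds; auto.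
Qed.

Lemma Qcoef_le_walk_count q n : (1 <= c)%nat -> 0 <= q ->
  Qcoef c d p q (S n) <= q * walk_sum n (fun _ => 1) 0%Z.
Proof.
  intros Hc Hq. rewrite Qcoef_walk_sum. apply Rmult_le_compat_l; [exact Hq|].
  apply walk_sum_le; [exact p_ge0 | |lia]. intros k Hk. apply catastrophe_ind_bounds; auto.
Qed.

(* After c + 1 up-jumps a walk is above c, where a catastrophe is always allowed. *)
Lemma Qcoef_ge_walk_count q n : (1 <= c)%nat -> (1 <= d)%nat -> 0 <= q ->
  q * p (Z.of_nat d) ^ S c * walk_sum n (fun _ => 1) 0%Z <= Qcoef c d p q (S (n + S c)).
Proof.
  intros Hc Hd Hq. rewrite Qcoef_walk_sum, walk_sum_add, Rmult_assoc.
  apply Rmult_le_compat_l; [exact Hq|].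
  rewrite <- walk_sum_scal. apply walk_sum_le; [exact p_ge0 | |lia]. intros k Hk.
  eapply Rle_trans; [|apply walk_sum_ge_up; auto; intros; apply catastrophe_ind_bounds; auto].
  assert (Hk' : (Z.of_nat c < k + Z.of_nat (S c) * Z.of_nat d)%Z) by nia.
  rewrite (proj2 (catastrophe_ind_bounds c p (k + Z.of_nat (S c) * Z.of_nat d) Hc ltac:(lia)) Hk').
  lra.
Qed.

Lemma walk_count_ge_drift : 0 <= P' 1 -> forall n,
  P 1 ^ n <= (INR n * INR d + 1) * walk_sum n (fun _ => 1) 0%Z.
Proof.
  intros Hdrift n. set (f := fun k : Z => IZR k + 1).
  assert (Hf0 : forall k, (0 <= k)%Z -> 0 <= f k)
    by (intros k Hk; apply IZR_le in Hk; unfold f; lra).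
  assert (Hstep : forall h, (0 <= h)%Z -> P 1 * f h <= step_op f h).
  { intros h Hh. eapply Rle_trans; [|apply zsum_le_step_op; auto].
    - assert (E : zsum c d (fun i => p i * f (h + i)%Z) = f h * P 1 + P' 1).
      { unfold Pjump, Pjump'. rewrite <- zsum_scal, <- zsum_plus. apply zsum_ext.
        intros i _. unfold f. rewrite !powerRZ_R1, plus_IZR. ring. }
      rewrite E. lra.
    - intros k Hk. unfold f. assert (Hk1 : (k <= -1)%Z) by lia. apply IZR_le in Hk1. lra. }
  pose proof (walk_sum_ge_pow f (P 1) Pjump_1_ge0 Hf0 Hstep n 0%Z
                ltac:(lia)) as L.
  unfold f at 1 in L. rewrite Rplus_0_l, Rmult_1_r in L.
  eapply Rle_trans; [apply L|]. rewrite <- walk_sum_scal.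
  apply walk_sum_le_on; [exact p_ge0 | lia|]. intros k Hk. unfold f. rewrite Rmult_1_r.
  assert (IZR k <= INR n * INR d) by (rewrite !INR_IZR_INZ, <- mult_IZR; apply IZR_le; lia).
  lra.
Qed.

(* F k = (k + c + 1) tau^(k + c) - 1 is nonnegative from -c on, and since P'(tau) = 0 its drift
   is exactly P(tau) F - (P(1) - P(tau)). *)
Lemma walk_count_series_bound tau : 1 < tau -> P' tau = 0 -> P tau < P 1 -> forall N,
  (P 1 - P tau) * sum_f_R0 (fun m => / P tau ^ S m * walk_sum m (fun _ => 1) 0%Z) N
    <= powerRZ tau (Z.of_nat c) * (INR c + 1) - 1.
Proof.
  intros Ht HP' HPl N. pose proof (Pjump_pos tau ltac:(lra)) as HPt.
  set (F := fun k : Z => powerRZ tau (Z.of_nat c) * ((IZR k + INR c + 1) * powerRZ tau k) - 1).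
  assert (HF : forall k, (- Z.of_nat c <= k)%Z -> 0 <= F k).
  { intros k Hk. unfold F. rewrite Rmult_comm, Rmult_assoc, <- powerRZ_add by lra.
    assert (1 <= powerRZ tau (k + Z.of_nat c)) by (apply powerRZ_ge_1; lra || lia).
    assert (1 <= IZR k + INR c + 1).
    { rewrite INR_IZR_INZ, <- plus_IZR.
      assert (Hkc : (0 <= k + Z.of_nat c)%Z) by lia. apply IZR_le in Hkc. lra. }
    nra. }
  assert (Hdrift : forall h, (0 <= h)%Z -> step_op F h <= P tau * F h - (P 1 - P tau)).
  { intros h Hh. eapply Rle_trans; [apply step_op_le_zsum; auto; intros k Hk; apply HF; lia|].
    assert (E : zsum c d (fun i => p i * F (h + i)%Z) =
       powerRZ tau (Z.of_nat c) * (IZR h + INR c + 1) * powerRZ tau h * P tau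
       + powerRZ tau (Z.of_nat c) * powerRZ tau h * zsum c d (fun i => IZR i * p i * powerRZ tau i)
       - P 1).
    { unfold Pjump. rewrite <- !zsum_scal, <- zsum_plus, <- zsum_minus. apply zsum_ext.
      intros i _. unfold F. rewrite powerRZ_R1, plus_IZR, powerRZ_add by lra. ring. }
    rewrite E, zsum_IZR_powerRZ, HP' by lra. unfold F. lra. }
  pose proof (walk_sum_lyapunov F (P tau) (P 1 - P tau) HPt
     (fun k Hk => HF k ltac:(lia)) Hdrift N 0%Z ltac:(lia)) as L.
  assert (0 <= / P tau ^ S N * walk_sum (S N) F 0%Z).
  { apply Rmult_le_pos; [left; apply Rinv_0_lt_compat, pow_lt; auto|].
    apply walk_sum_ge0; [exact p_ge0 | |lia]. intros; apply HF; lia. }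
  assert (F 0%Z = powerRZ tau (Z.of_nat c) * (INR c + 1) - 1) by (unfold F; simpl; ring).
  lra.
Qed.

(* Since P'(tau) = 0 only the second-order term sum_i i^2 p_i tau^i is lost, and a wide enough
   parabola (large L) absorbs it. *)
Lemma step_op_bump tau lam L : 0 < tau -> P' tau = 0 -> 0 <= lam <= P tau ->
  zsum c d (fun i => IZR i * IZR i * p i * powerRZ tau i) <= (P tau - lam) * (INR L + 1) ->
  forall h, (0 <= h)%Z -> lam * bump tau L h <= step_op (bump tau L) h.
Proof.
  intros Ht HP' Hl HL h Hh.
  destruct (Z_lt_le_dec (Z.of_nat L) h) as [HhL|HhL].
  { rewrite bump_outside by lia. rewrite Rmult_0_r.
    apply zsum_ge0. intros i Hi. destruct (0 <=? h + i)%Z; [|lra].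
    apply Rmult_le_pos; [apply p_ge0, Hi | apply bump_ge0, Ht]. }
  set (phi := fun k : Z => (IZR k + 1) * (INR L + 1 - IZR k)).
  assert (E : zsum c d (fun i => p i * (powerRZ tau (h + i) * phi (h + i)%Z)) =
     powerRZ tau h * (phi h * P tau
                      + (INR L - 2 * IZR h) * zsum c d (fun i => IZR i * p i * powerRZ tau i)
                      - zsum c d (fun i => IZR i * IZR i * p i * powerRZ tau i))).
  { unfold Pjump. rewrite <- !zsum_scal, <- zsum_plus, <- zsum_minus, <- zsum_scal.
    apply zsum_ext. intros i _. unfold phi. rewrite powerRZ_add, plus_IZR by lra. ring. }
  rewrite zsum_IZR_powerRZ, HP', Rmult_0_r, Rmult_0_r, Rplus_0_r in E by lra.
  assert (Hphi : INR L + 1 <= phi h).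
  { unfold phi. apply IZR_le in Hh, HhL. rewrite <- INR_IZR_INZ in HhL. simpl in Hh. nra. }
  assert (Hb : bump tau L h = powerRZ tau h * phi h).
  { unfold bump. fold (phi h). rewrite Rmax_right; [reflexivity | pose proof (pos_INR L); lra]. }
  eapply Rle_trans; [|apply zsum_le_step_op; intros; rewrite bump_outside by lia; lra].
  eapply Rle_trans; [|apply zsum_le; intros i Hi; apply Rmult_le_compat_l;
    [apply p_ge0, Hi | apply Rmult_le_compat_l; [apply powerRZ_le; lra | apply Rmax_r]]].
  change (lam * bump tau L h <= zsum c d (fun i => p i * (powerRZ tau (h + i) * phi (h + i)%Z))).
  rewrite E, Hb. assert (0 < powerRZ tau h) by (apply powerRZ_lt, Ht).
  rewrite <- Rmult_assoc, (Rmult_comm lam), Rmult_assoc.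
  apply Rmult_le_compat_l; [lra|].
  assert (0 <= (P tau - lam) * (phi h - (INR L + 1))) by (apply Rmult_le_pos; lra). nra.
Qed.

Lemma walk_count_ge_exp tau lam : 0 < tau -> P' tau = 0 -> 0 <= lam -> lam < P tau ->
  exists C, 0 < C /\ forall n, C * lam ^ n <= walk_sum n (fun _ => 1) 0%Z.
Proof.
  intros Ht HP' Hl Hlt.
  set (S2 := zsum c d (fun i => IZR i * IZR i * p i * powerRZ tau i)).
  destruct (INR_unbounded (S2 / (P tau - lam))) as [L HL].
  assert (HS2 : S2 <= (P tau - lam) * (INR L + 1)).
  { replace S2 with ((P tau - lam) * (S2 / (P tau - lam))) at 1 by (field; lra).
    apply Rmult_le_compat_l; lra. }
  set (G := (1 + tau) ^ L * ((INR L + 1) * (INR L + 1))).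
  assert (HG : 0 < G).
  { pose proof (pos_INR L). apply Rmult_lt_0_compat; [apply pow_lt | ]; nra. }
  exists ((INR L + 1) / G).
  split; [apply Rdiv_lt_0_compat; [pose proof (pos_INR L); lra | exact HG]|].
  intros n.
  pose proof (walk_sum_ge_pow (bump tau L) lam Hl (fun k _ => bump_ge0 tau L k Ht)
                (step_op_bump tau lam L Ht HP' ltac:(lra) HS2) n 0%Z ltac:(lia)) as Hlow.
  rewrite bump_0 in Hlow.
  assert (walk_sum n (bump tau L) 0%Z <= G * walk_sum n (fun _ => 1) 0%Z).
  { rewrite <- walk_sum_scal. apply walk_sum_le; [exact p_ge0 | |lia].
    intros k _. rewrite Rmult_1_r. apply bump_le, Ht. }
  apply Rmult_le_reg_l with G; [exact HG|].
  replace (G * ((INR L + 1) / G * lam ^ n)) with (lam ^ n * (INR L + 1)) by (field; lra).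
  lra.
Qed.

End Growth.

Lemma sum_n_RtoC (u : nat -> R) N :
  sum_n (G := C_AbelianMonoid) (fun n => RtoC (u n)) N = RtoC (sum_n u N).
Proof.
  induction N as [|N IH]; [now rewrite !sum_O|].
  rewrite !sum_Sn, IH.
  change (Cplus (RtoC (sum_n u N)) (RtoC (u (S N))) = RtoC (sum_n u N + u (S N))).
  symmetry. apply RtoC_plus.
Qed.

Lemma is_series_RtoC (u : nat -> R) (l : R) :
  is_series (K := C_AbsRing) (V := C_NormedModule) (fun n => RtoC (u n)) (RtoC l) <-> is_series u l.
Proof.
  unfold is_series.
  assert (Hdist : forall N, norm (K := C_AbsRing) (minus (sum_n (fun n => RtoC (u n)) N) (RtoC l))
                            = norm (minus (sum_n u N) l)).
  { intros N. rewrite sum_n_RtoC.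
    change (Cmod (Cminus (RtoC (sum_n u N)) (RtoC l)) = Rabs (sum_n u N - l)).
    now rewrite <- RtoC_minus, Cmod_R. }
  split; intros H.
  - apply (filterlim_locally_ball_norm (K := R_AbsRing)). intros eps.
    apply (filterlim_locally_ball_norm (K := C_AbsRing)) with (eps := eps) in H.
    revert H. apply filter_imp. intros N HN. unfold ball_norm in *. now rewrite <- Hdist.
  - apply (filterlim_locally_ball_norm (K := C_AbsRing)). intros eps.
    apply (filterlim_locally_ball_norm (K := R_AbsRing)) with (eps := eps) in H.
    revert H. apply filter_imp. intros N HN. unfold ball_norm in *. now rewrite Hdist.
Qed.

Lemma pow_n_RtoC (x : R) n : pow_n (K := C_Ring) (RtoC x) n = RtoC (x ^ n).
Proof.
  induction n as [|n IH]; [reflexivity|]. simpl. rewrite IH.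
  change (Cmult (RtoC x) (RtoC (x ^ n)) = RtoC (x * x ^ n)). symmetry. apply RtoC_mult.
Qed.

Lemma Cmod_pow_n (z : C) n : Cmod (pow_n (K := C_Ring) z n) = Cmod z ^ n.
Proof.
  induction n as [|n IH]; simpl.
  - change (Cmod (RtoC 1) = 1). rewrite Cmod_R, Rabs_R1. reflexivity.
  - change (Cmod (Cmult z (pow_n (K := C_Ring) z n)) = Cmod z * Cmod z ^ n).
    rewrite Cmod_mult, IH. reflexivity.
Qed.

Lemma Cmod_sum_n (b : nat -> C) N :
  Cmod (sum_n (G := C_AbelianMonoid) b N) <= sum_f_R0 (fun n => Cmod (b n)) N.
Proof.
  induction N as [|N IH]; [rewrite sum_O; simpl; lra|].
  rewrite sum_Sn. simpl. eapply Rle_trans; [apply Cmod_triangle|]. apply Rplus_le_compat_r, IH.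
Qed.

Lemma is_series_C_terms_bounded (b : nat -> C) w :
  is_series (K := C_AbsRing) (V := C_NormedModule) b w -> exists M, forall n, Cmod (b n) <= M.
Proof.
  intros Hb.
  apply (filterlim_locally_ball_norm (K := C_AbsRing)) with (eps := mkposreal 1 Rlt_0_1) in Hb.
  destruct Hb as [N HN].
  exists (2 + sum_f_R0 (fun n => Cmod (b n)) N). intros n.
  pose proof (sum_f_R0_ge0 (fun n => Cmod (b n)) N (fun j _ => Cmod_ge_0 (b j))).
  destruct (le_lt_dec n N) as [HnN|HNn].
  - pose proof (sum_f_R0_ge_term (fun n => Cmod (b n)) N n (fun j _ => Cmod_ge_0 (b j)) HnN). lra.
  - destruct n as [|n]; [lia|].
    pose proof (HN (S n) ltac:(lia)) as H1. pose proof (HN n ltac:(lia)) as H2.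
    unfold ball_norm in H1, H2. simpl in H1, H2. rewrite sum_Sn in H1.
    set (s := sum_n b n) in *.
    change (Cmod (Cminus (Cplus s (b (S n))) w) < 1) in H1.
    change (Cmod (Cminus s w) < 1) in H2.
    assert (Cmod (b (S n)) <= Cmod (Cminus (Cplus s (b (S n))) w) + Cmod (Cminus s w)).
    { replace (b (S n)) with (Cminus (Cminus (Cplus s (b (S n))) w) (Cminus s w)) at 1 by ring.
      unfold Cminus at 1. eapply Rle_trans; [apply Cmod_triangle|]. rewrite Cmod_opp. lra. }
    lra.
Qed.

Section ComplexPowerSeries.
Variable a : nat -> R.
Hypothesis a_ge0 : forall n, 0 <= a n.
Local Notation term z n := (RtoC (a n) * pow_n (K := C_Ring) z n)%C.

Lemma Cmod_term z n : Cmod (term z n) = a n * Cmod z ^ n.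
Proof. rewrite Cmod_mult, Cmod_R, Rabs_pos_eq, Cmod_pow_n; auto. Qed.

Lemma is_series_C_real x l :
  is_series (K := C_AbsRing) (V := C_NormedModule) (fun n => term (RtoC x) n) (RtoC l)
  <-> is_series (fun n => a n * x ^ n) l.
Proof.
  rewrite <- is_series_RtoC.
  split; apply is_series_ext; intros n; rewrite pow_n_RtoC, RtoC_mult; reflexivity.
Qed.

Lemma Cmod_le_majorant z w l :
  is_series (K := C_AbsRing) (V := C_NormedModule) (fun n => term z n) w ->
  is_series (fun n => a n * Cmod z ^ n) l -> Cmod w <= l.
Proof.
  intros Hz Hl. apply Rnot_lt_le. intros Hlt.
  apply (filterlim_locally_ball_norm (K := C_AbsRing))
    with (eps := mkposreal _ (proj2 (Rlt_0_minus _ _) Hlt)) in Hz.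
  destruct Hz as [N HN]. specialize (HN N (Nat.le_refl N)). unfold ball_norm in HN. simpl in HN.
  set (s := sum_n (fun n => term z n) N) in *.
  change (Cmod (Cminus s w) < Cmod w - l) in HN.
  assert (Cmod s <= l).
  { eapply Rle_trans; [apply Cmod_sum_n|].
    assert (Hnn : forall n, 0 <= a n * Cmod z ^ n)
      by (intros; apply pseries_term_ge0, Cmod_ge_0; exact a_ge0).
    eapply Rle_trans; [|exact (is_series_partial_le _ _ Hnn Hl N)].
    right. apply sum_eq. intros i _. apply Cmod_term. }
  assert (Cmod w <= Cmod s + Cmod (Cminus s w)).
  { replace w with (Cminus s (Cminus s w)) at 1 by ring.
    unfold Cminus. eapply Rle_trans; [apply Cmod_triangle|]. rewrite Cmod_opp. lra. }
  lra.
Qed.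

Lemma Cmod_le_radius z w :
  is_series (K := C_AbsRing) (V := C_NormedModule) (fun n => term z n) w ->
  Rbar_le (Cmod z) (CV_radius a).
Proof.
  intros Hz. apply (proj1 (CV_radius_bounded a)).
  destruct (is_series_C_terms_bounded _ _ Hz) as [M HM]. exists M. intros n.
  rewrite Rabs_pos_eq by (apply pseries_term_ge0, Cmod_ge_0; exact a_ge0).
  rewrite <- Cmod_term. apply HM.
Qed.

Lemma majorant_dichotomy z :
  is_series (K := C_AbsRing) (V := C_NormedModule) (fun n => term z n) (RtoC 1) ->
  (exists N, 1 < sum_f_R0 (fun n => a n * Cmod z ^ n) N) \/
  is_series (fun n => a n * Cmod z ^ n) 1.
Proof.
  intros Hz. destruct (classic (exists N, 1 < sum_f_R0 (fun n => a n * Cmod z ^ n) N)) as [H|H];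
    [now left | right].
  destruct (is_series_of_bounded_partial (fun n => a n * Cmod z ^ n) 1) as [l [Hl Hl1]].
  - intros n. apply pseries_term_ge0, Cmod_ge_0. exact a_ge0.
  - intros N. apply Rnot_lt_le. intros HN. apply H. now exists N.
  - pose proof (Cmod_le_majorant z _ l Hz Hl) as Hge. rewrite Cmod_1 in Hge.
    replace 1 with l by lra. exact Hl.
Qed.

End ComplexPowerSeries.

Lemma Q_is_real c d p q x l :
  Q_is c d p q (RtoC x) (RtoC l) <-> is_series (fun n => Qcoef c d p q n * x ^ n) l.
Proof. apply is_series_C_real. Qed.

Lemma Qreal_eq c d p q x l :
  is_series (fun n => Qcoef c d p q n * x ^ n) l -> Qreal c d p q x = Finite l.
Proof.
  intros H. apply is_lim_seq_unique, is_lim_seq_Reals, is_series_Reals, H.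
Qed.

Section Main.
Variables (c d : nat) (p : Z -> R) (q tau : R).
Hypothesis c_ge1 : (1 <= c)%nat.
Hypothesis d_ge1 : (1 <= d)%nat.
Hypothesis p_ge0 : forall i : Z, (- Z.of_nat c <= i <= Z.of_nat d)%Z -> 0 <= p i.
Hypothesis p_low : p (- Z.of_nat c)%Z <> 0.
Hypothesis p_high : p (Z.of_nat d) <> 0.
Hypothesis q_pos : 0 < q.
Hypothesis tau_pos : 0 < tau.
Hypothesis tau_crit : Pjump' c d p tau = 0.

Local Notation a := (Qcoef c d p q).
Local Notation P := (Pjump c d p).
Local Notation rho := (/ P tau).
Local Notation Qser x l := (is_series (fun n => a n * x ^ n) l).

Lemma Qcoef_nonneg n : 0 <= a n.
Proof. apply Qcoef_ge0; auto; lra. Qed.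

Lemma Qcoef_0 : a 0%nat = 0.
Proof. reflexivity. Qed.

Lemma Qcoef_SSc_pos : 0 < a (S (S c)).
Proof.
  change (S (S c)) with (S (0 + S c)).
  eapply Rlt_le_trans; [|apply Qcoef_ge_walk_count; auto; lra].
  simpl walk_sum. rewrite Rmult_1_r.
  apply Rmult_lt_0_compat; [exact q_pos | apply pow_lt, (p_high_pos c d p); auto].
Qed.

Lemma Qseries_lt x y lx ly : 0 <= x < y -> Qser x lx -> Qser y ly -> lx < ly.
Proof. apply (pseries_lt a Qcoef_nonneg Qcoef_0 _ _ _ _ _ Qcoef_SSc_pos). Qed.

Lemma P_tau_pos : 0 < P tau.
Proof. apply Pjump_pos; auto. Qed.

Lemma P_1_pos : 0 < P 1.
Proof. apply Pjump_pos; auto; lra. Qed.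

(* tau is a critical point of the strictly convex P, hence its minimum on (0, +oo). *)
Lemma P_tau_le u : 0 < u -> P tau <= P u.
Proof.
  intros Hu. destruct (Req_dec u tau) as [->|Hne]; [lra|].
  pose proof (Pjump_gt_tangent c d p p_ge0 p_low u tau c_ge1 Hu tau_pos Hne) as H.
  rewrite tau_crit in H. lra.
Qed.

Lemma inv_P1_le_rho : / P 1 <= rho.
Proof. apply Rinv_le_contravar; [apply P_tau_pos | apply P_tau_le; lra]. Qed.

Lemma Qcoef_radius_ge_inv_P1 : Rbar_le (/ P 1) (CV_radius a).
Proof.
  pose proof P_1_pos. apply (proj1 (CV_radius_bounded a)). exists (q / P 1). intros n.
  rewrite Rabs_pos_eq
    by (apply pseries_term_ge0; [exact Qcoef_nonneg | left; apply Rinv_0_lt_compat; lra]).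
  destruct n as [|n]; [simpl; rewrite Rmult_0_l; apply Rlt_le, Rdiv_lt_0_compat; lra|].
  rewrite pow_inv.
  apply Rle_trans with (q * P 1 ^ n * / P 1 ^ S n).
  - apply Rmult_le_compat_r; [left; apply Rinv_0_lt_compat, pow_lt; lra|].
    eapply Rle_trans; [apply Qcoef_le_walk_count; auto; lra|].
    apply Rmult_le_compat_l; [lra | apply walk_count_le_pow; auto; lia].
  - right. simpl. field. split; [lra | apply pow_nonzero; lra].
Qed.

Lemma Qcoef_radius_le_rho : Rbar_le (CV_radius a) rho.
Proof.
  apply Rbar_le_inv_limit; [apply P_tau_pos|]. intros lam Hlam.
  destruct (walk_count_ge_exp c d p p_ge0 tau lam tau_pos tau_crit ltac:(lra) ltac:(lra))
    as [C [HC HCn]].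
  assert (Hqp : 0 < q * p (Z.of_nat d) ^ S c)
    by (apply Rmult_lt_0_compat; [exact q_pos | apply pow_lt, (p_high_pos c d p); auto]).
  apply (CV_radius_le_of_geometric_lower a (S (S c)) (q * p (Z.of_nat d) ^ S c * C) lam);
    [apply Rmult_lt_0_compat; lra | lra |].
  intros n. replace (n + S (S c))%nat with (S (n + S c)) by lia.
  eapply Rle_trans; [|apply Qcoef_ge_walk_count; auto; lra].
  rewrite Rmult_assoc. apply Rmult_le_compat_l; [lra | apply HCn].
Qed.

Lemma Zset_real r : Zset c d p q rho (RtoC r) -> Qser r 1.
Proof. intros [[_ HQ] _]. now apply Q_is_real. Qed.

Lemma Qser_1_pos r : 0 <= r -> Qser r 1 -> 0 < r.
Proof.
  intros Hr H. destruct (Req_dec r 0) as [->|]; [|lra].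
  apply (pseries_at_0 a Qcoef_0) in H. lra.
Qed.

Lemma zero_le_real_below z : zero_le c d p q rho z -> exists r, 0 < r <= Cmod z /\ Qser r 1.
Proof.
  intros [_ HQ]. pose proof (Cmod_ge_0 z).
  destruct (majorant_dichotomy a Qcoef_nonneg z HQ) as [[N HN]|Hs].
  - assert (Hs0 : 0 < Cmod z).
    { destruct (Req_dec (Cmod z) 0) as [E|]; [|lra].
      rewrite E, (pseries_partial_at_0 a Qcoef_0) in HN. lra. }
    destruct (pseries_eq_one_below a Qcoef_nonneg Qcoef_0 (Cmod z) N Hs0
                (Cmod_le_radius a Qcoef_nonneg z _ HQ) HN)
      as [r [Hr H1]].
    exists r. split; [lra | exact H1].
  - exists (Cmod z). split; [split; [apply Qser_1_pos|]; auto; lra | exact Hs].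
Qed.

Lemma Zset_char r0 : 0 < r0 <= rho -> Qser r0 1 ->
  Zset c d p q rho (RtoC r0) /\ (forall r, 0 < r -> Zset c d p q rho (RtoC r) -> r = r0).
Proof.
  intros Hr0 H1.
  assert (HZ : Zset c d p q rho (RtoC r0)).
  { split; [split; [rewrite Cmod_R, Rabs_pos_eq; lra | now apply Q_is_real]|].
    intros w Hw. destruct (zero_le_real_below w Hw) as [r [Hr Hrs]].
    rewrite Cmod_R, Rabs_pos_eq by lra.
    apply Rnot_lt_le. intros Hlt. pose proof (Qseries_lt r r0 1 1 ltac:(lra) Hrs H1). lra. }
  split; [exact HZ|]. intros r Hr HZr. pose proof (Zset_real r HZr) as Hs.
  destruct (Rtotal_order r r0) as [Hlt|[Heq|Hgt]]; [| exact Heq |]; exfalso.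
  - pose proof (Qseries_lt r r0 1 1 ltac:(lra) Hs H1). lra.
  - pose proof (Qseries_lt r0 r 1 1 ltac:(lra) H1 Hs). lra.
Qed.

Lemma Dcoef_radius_eq r0 : 0 < r0 -> Qser r0 1 -> CV_radius (Dcoef c d p q) = Finite r0.
Proof.
  intros Hr H1. apply Rbar_eq_of_squeeze; [lra | apply CV_radius_ge_0 | |].
  - apply Dcoef_radius_le; [exact Qcoef_nonneg | exact Hr | exact H1].
  - intros x Hx. destruct (pseries_below a Qcoef_nonneg x r0 1 ltac:(lra) H1) as [lx [Hx1 _]].
    apply (Dcoef_radius_ge c d p q Qcoef_nonneg x lx); [lra | exact Hx1|].
    exact (Qseries_lt x r0 lx 1 Hx Hx1 H1).
Qed.

Lemma Qcoef_ge_harmonic : 0 <= Pjump' c d p 1 -> forall n,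
  q * p (Z.of_nat d) ^ S c / (P 1 ^ S (S c) * INR d) * / (INR n + 1)
    <= a (S (n + S c)) * (/ P 1) ^ S (n + S c).
Proof.
  intros Hdrift n. pose proof P_1_pos. pose proof (pos_INR n).
  assert (Hd : 1 <= INR d) by (apply (le_INR 1); exact d_ge1).
  set (W := walk_sum c d p n (fun _ => 1) 0%Z).
  set (K := q * p (Z.of_nat d) ^ S c).
  assert (HK : 0 < K)
    by (apply Rmult_lt_0_compat; [exact q_pos | apply pow_lt, (p_high_pos c d p); auto]).
  assert (Ha : K * W <= a (S (n + S c))) by (apply Qcoef_ge_walk_count; auto; lra).
  assert (HW : P 1 ^ n <= INR d * (INR n + 1) * W).
  { pose proof (walk_count_ge_drift c d p p_ge0 Hdrift n) as HD. fold W in HD.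
    assert (0 <= W) by (apply walk_sum_ge0; [exact p_ge0 | intros; lra | lia]).
    assert (0 <= (INR d - 1) * W) by (apply Rmult_le_pos; lra). nra. }
  assert (HPn : 0 < P 1 ^ n) by (apply pow_lt; lra).
  assert (HPc : 0 < P 1 ^ S (S c)) by (apply pow_lt; lra).
  rewrite pow_inv. replace (S (n + S c)) with (n + S (S c))%nat by lia. rewrite pow_add.
  apply Rle_trans with (K * W * / (P 1 ^ n * P 1 ^ S (S c))).
  2:{ apply Rmult_le_compat_r; [left; apply Rinv_0_lt_compat; nra|].
      replace (n + S (S c))%nat with (S (n + S c)) by lia. exact Ha. }
  replace (K * W * / (P 1 ^ n * P 1 ^ S (S c)))
    with (K / (P 1 ^ S (S c) * INR d * (INR n + 1)) * (INR d * (INR n + 1) * W / P 1 ^ n))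
    by (field; repeat split; lra).
  replace (K / (P 1 ^ S (S c) * INR d) * / (INR n + 1))
    with (K / (P 1 ^ S (S c) * INR d * (INR n + 1)) * 1) by (field; repeat split; lra).
  apply Rmult_le_compat_l.
  - apply Rlt_le, Rdiv_lt_0_compat; [exact HK|].
    apply Rmult_lt_0_compat; [apply Rmult_lt_0_compat|]; lra.
  - apply Rmult_le_reg_r with (P 1 ^ n); [exact HPn|].
    unfold Rdiv. rewrite Rmult_assoc, Rinv_l, Rmult_1_l, Rmult_1_r; lra.
Qed.

Lemma drift_nonneg_partial_gt_1 : 0 <= Pjump' c d p 1 ->
  exists N, 1 < sum_f_R0 (fun n => a n * (/ P 1) ^ n) N.
Proof.
  intros Hdrift. pose proof P_1_pos.
  assert (Hd : 1 <= INR d) by (apply (le_INR 1); exact d_ge1).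
  set (C0 := q * p (Z.of_nat d) ^ S c / (P 1 ^ S (S c) * INR d)).
  assert (HC0 : 0 < C0).
  { apply Rdiv_lt_0_compat; apply Rmult_lt_0_compat;
      try apply pow_lt; try apply (p_high_pos c d p); auto; lra. }
  destruct (harmonic_unbounded (/ C0)) as [N HN]. exists (N + S (S c))%nat.
  eapply Rlt_le_trans;
    [|apply sum_f_R0_shift_le; intros;
      apply pseries_term_ge0; [exact Qcoef_nonneg | left; apply Rinv_0_lt_compat; lra]].
  apply Rlt_le_trans with (sum_f_R0 (fun n => C0 * / (INR n + 1)) N).
  - replace (sum_f_R0 (fun n => C0 * / (INR n + 1)) N)
      with (C0 * sum_f_R0 (fun n => / (INR n + 1)) N)
      by (rewrite scal_sum; apply sum_eq; intros; ring).
    apply Rmult_lt_reg_l with (/ C0); [apply Rinv_0_lt_compat, HC0|].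
    rewrite <- Rmult_assoc, Rinv_l, Rmult_1_l, Rmult_1_r by lra. exact HN.
  - apply sum_Rle. intros n _. replace (n + S (S c))%nat with (S (n + S c)) by lia.
    apply Qcoef_ge_harmonic, Hdrift.
Qed.

Lemma case_drift_nonneg : 0 <= Pjump' c d p 1 ->
  exists rho0, 0 < rho0 /\ Zset c d p q rho (RtoC rho0) /\
    CV_radius (Dcoef c d p q) = Finite rho0 /\ rho0 < / P 1 /\ / P 1 <= rho.
Proof.
  intros Hdrift. pose proof P_1_pos. pose proof inv_P1_le_rho.
  destruct (drift_nonneg_partial_gt_1 Hdrift) as [N HN].
  destruct (pseries_eq_one_below a Qcoef_nonneg Qcoef_0 (/ P 1) N ltac:(apply Rinv_0_lt_compat; lra)
              Qcoef_radius_ge_inv_P1 HN) as [r0 [Hr0 H1]].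
  exists r0. split; [lra|]. split; [apply Zset_char; [lra | exact H1]|].
  split; [apply Dcoef_radius_eq; [lra | exact H1] | lra].
Qed.

Lemma Zset_empty_or_unique :
  (forall z, ~ Zset c d p q rho z) \/ (exists! r, 0 < r /\ Zset c d p q rho (RtoC r)).
Proof.
  destruct (classic (exists r0, 0 < r0 <= rho /\ Qser r0 1)) as [[r0 [Hr0 H1]]|Hnone].
  - right. destruct (Zset_char r0 Hr0 H1) as [HZ Huniq].
    exists r0. split; [split; [lra | exact HZ]|].
    intros r [Hr HZr]. symmetry. exact (Huniq r Hr HZr).
  - left. intros z [Hz _]. destruct (zero_le_real_below z Hz) as [r [Hr H1]].
    apply Hnone. exists r. destruct Hz as [Hzr _]. split; [lra | exact H1].
Qed.

Lemma tau_gt_1 : Pjump' c d p 1 < 0 -> 1 < tau /\ P tau < P 1.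
Proof.
  intros Hdrift. assert (Hne : tau <> 1) by (intros E; rewrite E in tau_crit; lra).
  pose proof (Pjump_gt_tangent c d p p_ge0 p_low 1 tau c_ge1 ltac:(lra) tau_pos ltac:(auto)) as H1.
  pose proof (Pjump_gt_tangent c d p p_ge0 p_low tau 1 c_ge1 tau_pos ltac:(lra) Hne) as H2.
  rewrite tau_crit in H1. split; [nra | lra].
Qed.

Lemma Qser_rho_converges : Pjump' c d p 1 < 0 -> exists l, Qser rho l.
Proof.
  intros Hdrift. destruct (tau_gt_1 Hdrift) as [Ht1 HPl]. pose proof P_tau_pos.
  set (B := powerRZ tau (Z.of_nat c) * (INR c + 1) - 1).
  assert (Hnn : forall n, 0 <= a n * rho ^ n)
    by (intros; apply pseries_term_ge0; [exact Qcoef_nonneg | left; apply Rinv_0_lt_compat; lra]).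
  destruct (is_series_of_bounded_partial _ (q * (B / (P 1 - P tau))) Hnn) as [l [Hl _]];
    [|now exists l].
  intros N. apply Rle_trans with (sum_f_R0 (fun n => a n * rho ^ n) (S N)).
  { rewrite tech5. specialize (Hnn (S N)). lra. }
  rewrite decomp_sum by lia. simpl pred. rewrite Qcoef_0, Rmult_0_l, Rplus_0_l.
  pose proof (walk_count_series_bound c d p p_ge0 p_low tau Ht1 tau_crit HPl N) as HS.
  apply Rle_trans
    with (q * sum_f_R0 (fun m => / P tau ^ S m * walk_sum c d p m (fun _ => 1) 0%Z) N).
  - rewrite scal_sum. apply sum_Rle. intros m _. rewrite pow_inv.
    assert (0 < / P tau ^ S m) by (apply Rinv_0_lt_compat, pow_lt; lra).
    pose proof (Qcoef_le_walk_count c d p p_ge0 q m c_ge1 ltac:(lra)). nra.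
  - apply Rmult_le_compat_l; [lra|]. fold B in HS.
    apply Rmult_le_reg_l with (P 1 - P tau); [lra|].
    replace ((P 1 - P tau) * (B / (P 1 - P tau))) with B by (field; lra). exact HS.
Qed.

Section RhoConvergent.
Variable Qr : R.
Hypothesis HQr : Qser rho Qr.

Lemma rho_le_Qcoef_radius : Rbar_le rho (CV_radius a).
Proof.
  apply (CV_radius_ge_of_is_series a rho Qr);
    [left; apply Rinv_0_lt_compat, P_tau_pos | exact Qcoef_nonneg | exact HQr].
Qed.

Lemma Qr_ge_1_of_zero z : zero_le c d p q rho z -> 1 <= Qr.
Proof.
  intros Hz. destruct (zero_le_real_below z Hz) as [r [Hr H1]]. destruct Hz as [Hzr _].
  destruct (Rle_lt_dec rho r) as [Hge|Hlt].
  - replace r with rho in H1 by lra. right. exact (is_series_eq _ _ _ H1 HQr).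
  - left. exact (Qseries_lt r rho 1 Qr ltac:(lra) H1 HQr).
Qed.

Lemma Qr_gt_1_iff : 1 < Qr <-> exists rho0, 0 < rho0 /\ Zset c d p q rho (RtoC rho0) /\
  CV_radius (Dcoef c d p q) = Finite rho0 /\ rho0 < rho.
Proof.
  pose proof P_tau_pos as HPt. split.
  - intros H. destruct (is_series_partial_gt _ _ _ HQr H) as [N HN].
    destruct (pseries_eq_one_below a Qcoef_nonneg Qcoef_0 rho N ltac:(apply Rinv_0_lt_compat; lra)
                rho_le_Qcoef_radius HN) as [r0 [Hr0 H1]].
    exists r0. split; [lra|]. split; [apply Zset_char; [lra | exact H1]|].
    split; [apply Dcoef_radius_eq; [lra | exact H1] | lra].
  - intros [r0 [Hr0 [HZ [_ Hlt]]]]. exact (Qseries_lt r0 rho 1 Qr ltac:(lra) (Zset_real r0 HZ) HQr).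
Qed.

Lemma Qr_eq_1_iff : Qr = 1 <-> exists rho0, 0 < rho0 /\ Zset c d p q rho (RtoC rho0) /\
  CV_radius (Dcoef c d p q) = Finite rho0 /\ rho0 = rho.
Proof.
  pose proof P_tau_pos as HPt. assert (Hrho : 0 < rho) by (apply Rinv_0_lt_compat; lra). split.
  - intros ->. exists rho. split; [exact Hrho|].
    split; [apply Zset_char; [lra | exact HQr]|].
    split; [apply Dcoef_radius_eq; auto | reflexivity].
  - intros [r0 [Hr0 [HZ [_ ->]]]]. exact (is_series_eq _ _ _ HQr (Zset_real rho HZ)).
Qed.

Lemma Qr_lt_1_iff : Qr < 1 <->
  CV_radius (Dcoef c d p q) = Finite rho /\ forall z, ~ Zset c d p q rho z.
Proof.
  pose proof P_tau_pos as HPt. assert (Hrho : 0 < rho) by (apply Rinv_0_lt_compat; lra). split.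
  - intros H. split.
    + apply Rbar_eq_of_squeeze; [lra | apply CV_radius_ge_0 | |].
      * eapply Rbar_le_trans;
          [apply Dcoef_radius_le_Qcoef, Qcoef_nonneg | exact Qcoef_radius_le_rho].
      * intros x Hx.
        destruct (pseries_below a Qcoef_nonneg x rho Qr ltac:(lra) HQr) as [lx [Hx1 _]].
        apply (Dcoef_radius_ge c d p q Qcoef_nonneg x lx); [lra | exact Hx1|].
        pose proof (Qseries_lt x rho lx Qr Hx Hx1 HQr). lra.
    + intros z [Hz _]. pose proof (Qr_ge_1_of_zero z Hz). lra.
  - intros [_ Hnone]. apply Rnot_le_lt. intros H.
    destruct (Rle_lt_dec Qr 1) as [H'|H'].
    + apply (Hnone (RtoC rho)). apply Zset_char; [lra|]. replace 1 with Qr by lra. exact HQr.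
    + destruct (proj1 Qr_gt_1_iff H') as [r0 [_ [HZ _]]]. exact (Hnone _ HZ).
Qed.

End RhoConvergent.

End Main.

Theorem lemma4p2 (c d : nat) (p : Z -> R) (q tau : R) :
  (1 <= c)%nat -> (1 <= d)%nat ->
  (forall i : Z, (- Z.of_nat c <= i <= Z.of_nat d)%Z -> 0 <= p i) ->
  p (- Z.of_nat c)%Z <> 0 -> p (Z.of_nat d) <> 0 ->
  aperiodic c d p ->
  0 < q ->
  (* tau = minimal positive real root of P' *)
  0 < tau -> Pjump' c d p tau = 0 ->
  (forall t, 0 < t < tau -> Pjump' c d p t <> 0) ->
  let rho := / Pjump c d p tau in
  let delta := Pjump' c d p 1 in
  let rhoD := CV_radius (Dcoef c d p q) in
  let Z := Zset c d p q rho in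
  (* Z is empty or has exactly one real positive element *)
  ((forall z, ~ Z z) \/ (exists! r : R, 0 < r /\ Z (RtoC r))) /\
  (0 <= delta ->
     exists rho0, 0 < rho0 /\ Z (RtoC rho0) /\ rhoD = Finite rho0 /\
       rho0 < / Pjump c d p 1 /\ / Pjump c d p 1 <= rho) /\
  (delta < 0 ->
     (Rbar_lt (Finite 1) (Qreal c d p q rho) <->
        exists rho0, 0 < rho0 /\ Z (RtoC rho0) /\ rhoD = Finite rho0 /\ rho0 < rho) /\
     (Qreal c d p q rho = Finite 1 <->
        exists rho0, 0 < rho0 /\ Z (RtoC rho0) /\ rhoD = Finite rho0 /\ rho0 = rho) /\
     (Rbar_lt (Qreal c d p q rho) (Finite 1) <->
        rhoD = Finite rho /\ forall z, ~ Z z)).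
Proof.
  intros Hc Hd Hp Hpc Hpd _ Hq Ht HP't _ rho delta rhoD Z.
  split; [apply Zset_empty_or_unique; auto|].
  split; [apply case_drift_nonneg; auto|].
  intros Hdrift. destruct (Qser_rho_converges c d p q tau) as [Qr HQr]; auto.
  subst rho delta rhoD Z. rewrite (Qreal_eq _ _ _ _ _ _ HQr). simpl.
  split; [|split].
  - apply Qr_gt_1_iff; auto.
  - rewrite Rbar_finite_eq.
    apply Qr_eq_1_iff; auto.
  - apply Qr_lt_1_iff; auto.
Qed.
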